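(* Let $(X(n),V(n))_{n\ge0}$ be a solution of the discrete Motsch–Tadmor model (as in the context), and assume there is an integer $n^\infty>0$ with $\|\Delta^x(n)\|_F\le M$ for all $n<n^\infty$ and $\|\Delta^x(n^\infty)\|_F>M$. Let $s_0<s_1<\dots<s_K$ be the distinct elements of the set $\{\|\Delta^x(n)\|_F:\ 0\le n\le n^\infty,\ \|\Delta^x(n)\|_F\ge\|\Delta^x(0)\|_F\}$, listed in increasing order. Then $s_0=\|\Delta^x(0)\|_F$, $s_K=\|\Delta^x(n^\infty)\|_F$, and \[ \sum_{q=0}^{K-1}(s_{q+1}-s_q)\,\psi(s_q)\le\sum_{n=0}^{n^\infty-1}\big(\|\Delta^x(n+1)\|_F-\|\Delta^x(n)\|_F\big)\,\psi(\|\Delta^x(n)\|_F). \]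
   Context: Discrete MT model: fix $N\ge1$, $d\ge1$, $\kappa>0$, $h>0$, and $a:[0,\infty)\to\mathbb{R}$ with constants $0<c_1\le c_2$, $c_1\le a\le c_2$, $|a(r_1)-a(r_2)|\le L_a|r_1-r_2|$ ($L_a>0$); $0<h<\min\{1,1/\kappa\}$. A solution satisfies $x_i(n+1)=x_i(n)+hv_i(n)$, $v_i(n+1)=v_i(n)+h\kappa\sum_j\phi_{ij}(n)(v_j(n)-v_i(n))$ with $\phi_{ij}(n)=\frac{a(\|x_i(n)-x_j(n)\|)}{\sum_ka(\|x_i(n)-x_k(n)\|)}$, $x_i,v_i\in\mathbb{R}^d$. Notation: $\|\Delta^x(n)\|_F=(\sum_{i,j}\|x_i(n)-x_j(n)\|^2)^{1/2}$. Constants: $\|\phi\|_{\mathrm{Lip}}=\frac{L_a}{Nc_1}(1+\frac{c_2}{c_1})$, $M=\frac{1}{4N\|\phi\|_{\mathrm{Lip}}}$, $\psi(s)=1-\|\phi\|_{\mathrm{Lip}}Ns$. *)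

From HB Require Import structures.
From mathcomp Require Import all_boot all_order all_algebra.
From mathcomp Require Import reals.
Set Implicit Arguments. Unset Strict Implicit. Unset Printing Implicit Defensive.
Import Order.TTheory GRing.Theory Num.Theory.
Local Open Scope ring_scope.

Section MT.
Variable R : realType.

Definition enorm (d : nat) (v : 'rV[R]_d) : R :=
  Num.sqrt (\sum_(k < d) (v 0 k) ^+ 2).

Definition mt_phi (N d : nat) (a : R -> R) (x : 'I_N -> 'rV[R]_d) (i j : 'I_N) : R :=
  a (enorm (x i - x j)) / \sum_(k < N) a (enorm (x i - x k)).

Definition MT_solution (N d : nat) (kappa h : R) (a : R -> R)
    (x v : nat -> 'I_N -> 'rV[R]_d) : Prop :=
  forall (n : nat) (i : 'I_N),
    x n.+1 i = x n i + h *: v n i /\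
    v n.+1 i = v n i + (h * kappa) *: \sum_(j < N) (mt_phi a (x n) i j *: (v n j - v n i)).

Definition DeltaF (N d : nat) (x : nat -> 'I_N -> 'rV[R]_d) (n : nat) : R :=
  Num.sqrt (\sum_(i < N) \sum_(j < N) (enorm (x n i - x n j)) ^+ 2).

Definition phiLip (N : nat) (c1 c2 La : R) : R :=
  La / (N%:R * c1) * (1 + c2 / c1).

Definition Mconst (N : nat) (c1 c2 La : R) : R :=
  1 / (4 * N%:R * phiLip N c1 c2 La).

Definition psi (N : nat) (c1 c2 La : R) (s : R) : R :=
  1 - phiLip N c1 c2 La * N%:R * s.

Definition level_seq (N d : nat) (x : nat -> 'I_N -> 'rV[R]_d) (ninf : nat) : seq R :=
  sort <=%R (undup [seq DeltaF x n | n <- iota 0 ninf.+1 & DeltaF x 0 <= DeltaF x n]).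

End MT.

From mathcomp Require Import all_boot all_order all_algebra.
From mathcomp Require Import reals ring lra.
Import Order.TTheory GRing.Theory Num.Theory.
Local Open Scope ring_scope.

(** The statement concerns only the real sequence u n := ||Delta^x(n)||_F,
    whose last value u(n^oo) is its maximum.
    Since psi is affine with slope -c <= 0, a weighted sum of increments
    telescopes:
      sum (u_{i+1} - u_i) psi(u_i) = G(end) - G(start) + c/2 sum (u_{i+1} - u_i)^2
    with G(t) = t - c t^2 / 2.  The two sides of the inequality have the same
    endpoints, so it suffices to compare the sums of squared increments.  Every
    gap (s_q, s_{q+1}) between consecutive levels is crossed by some step
    u_n <= s_q < s_{q+1} <= u_{n+1}, and the gaps crossed by a single step
    are disjoint subintervals of it, so their squares add up to at most the
    square of that step. *)

Lemma exists_crossing (P : pred nat) m :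
  P 0%N -> ~~ P m -> exists2 n, (n < m)%N & P n && ~~ P n.+1.
Proof.
move=> P0; elim: m => [|m IHm]; first by rewrite P0.
case Pm: (P m) => notPm1; first by exists m; rewrite // Pm.
by have [n lt_nm Pn] := IHm (negbT Pm); exists n => //; apply: ltnW.
Qed.

Section LevelSequence.
Variable R : realFieldType.
Implicit Types (u : nat -> R) (c lo hi : R).

Lemma sum_increments_affine_weight c u n :
  \sum_(i < n) (u i.+1 - u i) * (1 - c * u i) =
  (u n - c / 2 * u n ^+ 2) - (u 0%N - c / 2 * u 0%N ^+ 2)
  + c / 2 * \sum_(i < n) (u i.+1 - u i) ^+ 2.
Proof.
elim: n => [|n IHn]; first by rewrite !big_ord0; ring.
rewrite !big_ord_recr /= IHn.
have two_neq0 : (2 : R) != 0 by rewrite pnatr_eq0.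
by field.
Qed.

Lemma sum_gaps_within_le u K lo hi : lo <= hi ->
  (forall q, (q < K)%N -> u q <= u q.+1) ->
  \sum_(q < K | (lo <= u q) && (u q.+1 <= hi)) (u q.+1 - u q) <= hi - lo.
Proof.
move=> le_lo_hi u_mono; pose clamp y := Num.max lo (Num.min hi y).
have clamp_mono y z : y <= z -> clamp y <= clamp z.
  by move=> le_yz; rewrite le_max2 ?le_min2.
have clamp_id y : lo <= y <= hi -> clamp y = y.
  by case/andP=> lo_y y_hi; rewrite /clamp (min_r y_hi) (max_r lo_y).
have clamp_range y : lo <= clamp y <= hi.
  by rewrite le_max lexx ge_max le_lo_hi ge_min lexx ?orbT.
apply: (@le_trans _ _ (\sum_(q < K) (clamp (u q.+1) - clamp (u q)))).
  rewrite big_mkcond /=; apply: ler_sum => q _; have le_uq := u_mono q (ltn_ord q).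
  case: ifP => [/andP[lo_uq uq1_hi]|_]; last by rewrite subr_ge0 clamp_mono.
  by rewrite !clamp_id ?lo_uq ?uq1_hi ?(le_trans lo_uq) ?(le_trans le_uq).
rewrite -(big_mkord xpredT (fun q => clamp (u q.+1) - clamp (u q))) telescope_sumr //.
by have := clamp_range (u K); have := clamp_range (u 0%N); lra.
Qed.

Lemma sum_sq_gaps_within_le u K lo hi : lo <= hi ->
  (forall q, (q < K)%N -> u q <= u q.+1) ->
  \sum_(q < K | (lo <= u q) && (u q.+1 <= hi)) (u q.+1 - u q) ^+ 2 <= (hi - lo) ^+ 2.
Proof.
move=> le_lo_hi u_mono.
apply: (@le_trans _ _ (\sum_(q < K | (lo <= u q) && (u q.+1 <= hi))
                        (u q.+1 - u q) * (hi - lo))).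
  apply: ler_sum => q /andP[lo_uq uq_hi]; rewrite expr2 ler_wpM2l //.
    by rewrite subr_ge0 u_mono.
  lra.
rewrite -mulr_suml expr2 ler_wpM2r ?subr_ge0 //.
exact: sum_gaps_within_le.
Qed.

(* [level_seq x] is [levels (DeltaF x)] up to conversion. *)
Definition levels u m : seq R :=
  sort <=%R (undup [seq u n | n <- iota 0 m.+1 & u 0%N <= u n]).

Variables (u : nat -> R) (m : nat).
Local Notation s := (levels u m).

Lemma mem_levelsP w :
  reflect (exists2 n, (n <= m)%N & u 0%N <= u n /\ w = u n) (w \in s).
Proof.
rewrite mem_sort mem_undup; apply: (iffP mapP) => [[n]|[n le_nm [u0_le ->]]].
  by rewrite mem_filter mem_iota ltnS => /andP[u0_le /andP[_ le_nm]] ->; exists n.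
by exists n; rewrite // mem_filter mem_iota ltnS u0_le le_nm.
Qed.

Lemma levels_ge_start w : w \in s -> u 0%N <= w.
Proof. by case/mem_levelsP=> n _ [u0_le ->]. Qed.

Lemma mem_levels_start : u 0%N \in s.
Proof. by apply/mem_levelsP; exists 0%N. Qed.

Lemma levels_nth_le {i j} : (i <= j)%N -> (j < size s)%N -> nth 0 s i <= nth 0 s j.
Proof.
move=> le_ij lt_js; apply: (sorted_leq_nth le_trans lexx) => //.
  by apply: sort_sorted; apply: le_total.
by rewrite inE (leq_ltn_trans le_ij).
Qed.

Lemma levels_nth0 : nth 0 s 0 = u 0%N.
Proof.
have s_u0 := mem_levels_start.
have size_gt0 : (0 < size s)%N by case: (s) s_u0.
apply/le_anti/andP; split; last exact/levels_ge_start/mem_nth.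
by rewrite -{1}(nth_index 0 s_u0) levels_nth_le ?index_mem.
Qed.

Lemma levels_nth_last : (forall n, (n <= m)%N -> u n <= u m) ->
  nth 0 s (size s).-1 = u m.
Proof.
move=> u_max; have s_u0 := mem_levels_start.
have s_um : u m \in s by apply/mem_levelsP; exists m; rewrite ?u_max.
have size_gt0 : (0 < size s)%N by case: (s) s_u0.
have last_lt : ((size s).-1 < size s)%N by rewrite prednK.
apply/le_anti/andP; split.
  by have /mem_levelsP[n le_nm [_ ->]] := mem_nth 0 last_lt; apply: u_max.
by rewrite -{1}(nth_index 0 s_um) levels_nth_le // -ltnS prednK // index_mem.
Qed.

Lemma levels_gap_crossed {q} : (q.+1 < size s)%N -> nth 0 s q < nth 0 s q.+1 ->
  exists2 n, (n < m)%N & u n <= nth 0 s q /\ nth 0 s q.+1 <= u n.+1.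
Proof.
move=> lt_qs gap_pos.
have /mem_levelsP[j le_jm [_ sq1_eq]] := mem_nth 0 lt_qs.
have u0_le : u 0%N <= nth 0 s q by rewrite -levels_nth0 levels_nth_le // ltnW.
have [n lt_nj /andP[un_le]] : exists2 n, (n < j)%N &
    (u n <= nth 0 s q) && ~~ (u n.+1 <= nth 0 s q).
  by apply: exists_crossing; rewrite // -sq1_eq -ltNge.
rewrite -ltNge => lt_un1.
have s_un1 : u n.+1 \in s.
  by apply/mem_levelsP; exists n.+1; rewrite ?(leq_trans lt_nj) //; split=> //; lra.
exists n; first exact: leq_trans lt_nj le_jm.
split=> //; rewrite -(nth_index 0 s_un1) levels_nth_le ?index_mem //.
rewrite ltnNge; apply/negP => le_idx_q.
by have := levels_nth_le le_idx_q (ltnW lt_qs); rewrite nth_index // leNgt lt_un1.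
Qed.

Lemma sum_sq_level_gaps_le :
  \sum_(q < (size s).-1) (nth 0 s q.+1 - nth 0 s q) ^+ 2
    <= \sum_(n < m) (u n.+1 - u n) ^+ 2.
Proof.
have lt_q1s q : (q < (size s).-1)%N -> (q.+1 < size s)%N.
  by rewrite -ltn_predRL.
pose crosses n q := (Num.min (u n) (u n.+1) <= nth 0 s q) &&
                    (nth 0 s q.+1 <= Num.max (u n) (u n.+1)).
apply: (@le_trans _ _ (\sum_(q < (size s).-1) \sum_(n < m)
    (if crosses n q then (nth 0 s q.+1 - nth 0 s q) ^+ 2 else 0))).
  apply: ler_sum => q _; have lt_qs := lt_q1s q (ltn_ord q).
  have sum_ge0 : 0 <= \sum_(n < m)
      (if crosses n q then (nth 0 s q.+1 - nth 0 s q) ^+ 2 else 0).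
    by apply: sumr_ge0 => n _; case: ifP => // _; apply: sqr_ge0.
  have := levels_nth_le (leqnSn q) lt_qs; rewrite le_eqVlt => /orP[/eqP eq_gap|gap_pos].
    by rewrite {1}eq_gap subrr expr2 mulr0.
  have [n lt_nm [un_le le_un1]] := levels_gap_crossed lt_qs gap_pos.
  rewrite (bigD1 (Ordinal lt_nm)) //= ifT; last first.
    by rewrite /crosses ge_min un_le le_max le_un1 orbT.
  rewrite lerDl; apply: sumr_ge0 => i _; case: ifP => // _; apply: sqr_ge0.
rewrite exchange_big /=; apply: ler_sum => n _; rewrite -big_mkcond /=.
have -> : (u n.+1 - u n) ^+ 2 = (Num.max (u n) (u n.+1) - Num.min (u n) (u n.+1)) ^+ 2.
  by case: lerP => _ //; rewrite -sqrrN opprB.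
apply: sum_sq_gaps_within_le; first by rewrite ge_min !le_max lexx.
by move=> q /lt_q1s; apply: levels_nth_le.
Qed.

Lemma levels_sum_affine_weight_le c : 0 <= c ->
  (forall n, (n <= m)%N -> u n <= u m) ->
  \sum_(q < (size s).-1) (nth 0 s q.+1 - nth 0 s q) * (1 - c * nth 0 s q)
    <= \sum_(n < m) (u n.+1 - u n) * (1 - c * u n).
Proof.
move=> c_ge0 u_max.
rewrite (sum_increments_affine_weight c (nth 0 s)) sum_increments_affine_weight.
rewrite levels_nth0 levels_nth_last // lerD2l ler_wpM2l ?sum_sq_level_gaps_le //.
by rewrite divr_ge0.
Qed.

End LevelSequence.

Lemma phiLip_ge0 (R : realType) N (c1 c2 La : R) :
  0 <= c1 -> 0 <= c2 -> 0 <= La -> 0 <= phiLip N c1 c2 La.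
Proof.
move=> c1_ge0 c2_ge0 La_ge0.
by rewrite /phiLip mulr_ge0 ?addr_ge0 ?divr_ge0 ?mulr_ge0 //.
Qed.

Theorem lemmaA1 (R : realType) (N d : nat) (kappa h c1 c2 La : R) (a : R -> R)
    (x v : nat -> 'I_N -> 'rV[R]_d) (ninf : nat) :
  (1 <= N)%N -> (1 <= d)%N -> 0 < kappa -> 0 < h -> h < 1 -> h < 1 / kappa ->
  0 < c1 -> c1 <= c2 -> 0 < La ->
  (forall r, 0 <= r -> c1 <= a r /\ a r <= c2) ->
  (forall r1 r2, 0 <= r1 -> 0 <= r2 -> `|a r1 - a r2| <= La * `|r1 - r2|) ->
  MT_solution kappa h a x v ->
  (0 < ninf)%N ->
  (forall n, (n < ninf)%N -> DeltaF x n <= Mconst N c1 c2 La) ->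
  Mconst N c1 c2 La < DeltaF x ninf ->
  let s := level_seq x ninf in
  let K := (size s).-1 in
  nth 0 s 0 = DeltaF x 0 /\
  nth 0 s K = DeltaF x ninf /\
  \sum_(q < K) (nth 0 s q.+1 - nth 0 s q) * psi N c1 c2 La (nth 0 s q)
    <= \sum_(n < ninf) (DeltaF x n.+1 - DeltaF x n) * psi N c1 c2 La (DeltaF x n).
Proof.
move=> _ _ _ _ _ _ c1_gt0 le_c12 La_gt0 _ _ _ _ below_M above_M s K.
have DeltaF_max n : (n <= ninf)%N -> DeltaF x n <= DeltaF x ninf.
  rewrite leq_eqVlt => /orP[/eqP-> //|lt_n].
  exact: ltW (le_lt_trans (below_M n lt_n) above_M).
have c_ge0 : 0 <= phiLip N c1 c2 La * N%:R.
  by rewrite mulr_ge0 ?phiLip_ge0 //; lra.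
split; first exact: levels_nth0.
split; first exact: levels_nth_last.
exact: levels_sum_affine_weight_le c_ge0 DeltaF_max.
Qed.
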